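(* Let $\mathbb{X}$ be a topological space with viable base $\Omega_0$, $\mathbb{D}$ a bc-domain with basis $D_0$, and let $f=\bigsqcup_{i\in I}b_i\chi_{\mathcal{O}_{{\downarrow}W_i}}$ and $g=\bigsqcup_{j\in J}b'_j\chi_{\mathcal{O}_{{\downarrow}W'_j}}$ be elements of $\widehat{\mathbb{B}}$ (finite consistent families with $W_i,W'_j\in\Omega_0$, $b_i,b'_j\in D_0$). Then for each $i\in I$ there is $U_i\in\Omega_0$ with $\mathcal{O}_{{\downarrow}U_i}=g^{-1}(\twoheaduparrow b_i)$, and $f\ll g$ in $[\widehat{\mathbb{X}}_{\Omega_0}\to\mathbb{D}]$ if and only if $W_i\subseteq U_i$ for all $i\in I$.
   Context: A viable base of $\mathbb{X}=(X,\tau_{\mathbb{X}})$ is a family $\Omega_0\subseteq\tau_{\mathbb{X}}$ closed under finite unions and finite intersections (so $\emptyset,X\in\Omega_0$) which is a base of $\tau_{\mathbb{X}}$. ${\downarrow}W=\{U\in\Omega_0:U\subseteq W\}$. $\mathrm{Idl}(\Omega_0)$ is the set of ideals (nonempty, downward closed, directed subsets) of $(\Omega_0,\subseteq)$, ordered by inclusion; a complete lattice. A completely prime filter of a complete lattice $L$ is a nonempty upward closed $F\subseteq L$ closed under binary meets with $\bigvee A\in F\Rightarrow A\cap F\neq\emptyset$. $\widehat{\mathbb{X}}_{\Omega_0}$ is the set of completely prime filters of $\mathrm{Idl}(\Omega_0)$ with topology whose open sets are exactly $\mathcal{O}_I=\{y: I\in y\}$. A bc-domain is a continuous dcpo with least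 element $\bot$ in which bounded subsets have joins; $x\ll y$ is the way-below relation; $\twoheaduparrow b=\{d: b\ll d\}$. $[\widehat{\mathbb{X}}_{\Omega_0}\to\mathbb{D}]$ is the set of functions continuous into the Scott topology of $D$, ordered pointwise. $b\chi_O$ has value $b$ on $O$ and $\bot$ elsewhere; a family $\{b_i\chi_{O_i}\}$ is consistent if every subfamily with nonempty common intersection of the $O_i$ has bounded values $b_i$; $\widehat{\mathbb{B}}$ is the set of pointwise joins of finite consistent families $\{b_i\chi_{\mathcal{O}_{{\downarrow}W_i}}\}$ with $W_i\in\Omega_0$, $b_i\in D_0$. *)

From HB Require Import structures.
From mathcomp Require Import all_boot all_order.
From mathcomp Require Import boolp classical_sets topology.

Set Implicit Arguments.
Unset Strict Implicit.
Unset Printing Implicit Defensive.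

Local Open Scope classical_set_scope.

Section Order.
Variables (T : Type) (P : T -> Prop) (le : T -> T -> Prop).

Definition is_ub (S : T -> Prop) (u : T) : Prop :=
  forall x, S x -> le x u.

Definition is_sup (S : T -> Prop) (s : T) : Prop :=
  P s /\ is_ub S s /\ (forall u, P u -> is_ub S u -> le s u).

Definition is_inf2 (a b m : T) : Prop :=
  P m /\ le m a /\ le m b /\ (forall u, P u -> le u a -> le u b -> le u m).

Definition directed_in (S : T -> Prop) : Prop :=
  (exists x, S x) /\ (forall x, S x -> P x) /\
  (forall x y, S x -> S y -> exists z, S z /\ le x z /\ le y z).

Definition way_below (x y : T) : Prop :=
  forall S s, directed_in S -> is_sup S s -> le y s -> exists d, S d /\ le x d.

End Order.

Section Domain.
Variables (D : Type) (le : D -> D -> Prop).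

Definition all_D : D -> Prop := fun _ => True.

Definition is_partial_order : Prop :=
  (forall x, le x x) /\
  (forall x y z, le x y -> le y z -> le x z) /\
  (forall x y, le x y -> le y x -> x = y).

Definition is_bc_domain (bot : D) : Prop :=
  is_partial_order /\
  (forall S, directed_in all_D le S -> exists s, is_sup all_D le S s) /\
  (forall x, directed_in all_D le (fun d => way_below all_D le d x) /\
             is_sup all_D le (fun d => way_below all_D le d x) x) /\
  (forall x, le bot x) /\
  (forall S, (exists u, is_ub le S u) -> exists s, is_sup all_D le S s).

Definition is_basis (D0 : D -> Prop) : Prop :=
  forall x, directed_in all_D le (fun b => D0 b /\ way_below all_D le b x) /\
            is_sup all_D le (fun b => D0 b /\ way_below all_D le b x) x.

Definition scott_open (V : D -> Prop) : Prop :=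
  (forall d e, V d -> le d e -> V e) /\
  (forall S s, directed_in all_D le S -> is_sup all_D le S s -> V s ->
     exists d, S d /\ V d).

Definition wb_up (b : D) : D -> Prop := fun d => way_below all_D le b d.

End Domain.

Section Spaces.
Variables (X : topologicalType) (Omega0 : set (set X)).

Definition viable_base : Prop :=
  Omega0 `<=` open /\
  (forall U V, Omega0 U -> Omega0 V -> Omega0 (U `|` V)) /\
  (forall U V, Omega0 U -> Omega0 V -> Omega0 (U `&` V)) /\
  Omega0 set0 /\ Omega0 setT /\
  (forall A : set X, open A ->
     A = \bigcup_(U in [set U | Omega0 U /\ U `<=` A]) U).

Definition is_ideal (I : set (set X)) : Prop :=
  I `<=` Omega0 /\
  (exists U, I U) /\
  (forall U V, Omega0 U -> U `<=` V -> I V -> I U) /\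
  (forall U V, I U -> I V -> exists W, I W /\ U `<=` W /\ V `<=` W).

Definition ideal_le (I J : set (set X)) : Prop := I `<=` J.

Definition downW (W : set X) : set (set X) := [set U | Omega0 U /\ U `<=` W].

(* completely prime filters of the complete lattice Idl(Omega0) *)
Definition is_cpf (y : set (set (set X))) : Prop :=
  y `<=` is_ideal /\
  (exists I, y I) /\
  (forall I J, y I -> is_ideal J -> ideal_le I J -> y J) /\
  (forall I J M, y I -> y J -> is_inf2 is_ideal ideal_le I J M -> y M) /\
  (forall (A : set (set (set X))) J, A `<=` is_ideal ->
     is_sup is_ideal ideal_le A J -> y J -> exists I, A I /\ y I).

Definition Xhat := {y : set (set (set X)) | is_cpf y}.

Definition O_ (I : set (set X)) : Xhat -> Prop := fun y => proj1_sig y I.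

(* continuity of h : \hat X -> D into the Scott topology of D;
   the opens of \hat X are exactly the O_I, I an ideal *)
Definition scott_continuous (D : Type) (le : D -> D -> Prop)
  (h : Xhat -> D) : Prop :=
  forall V, scott_open le V ->
    exists I, is_ideal I /\ (forall y, V (h y) <-> O_ I y).

Definition fun_le (D : Type) (le : D -> D -> Prop) (h k : Xhat -> D) : Prop :=
  forall y, le (h y) (k y).

(* value of the step function b chi_{O_{downW W}} at y, as a set of candidate
   values: {b} if y in O_{downW W}, {bot} otherwise *)
Definition step_val (D : Type) (bot b : D) (W : set X) (y : Xhat) : D -> Prop :=
  fun d => (O_ (downW W) y /\ d = b) \/ (~ O_ (downW W) y /\ d = bot).

Definition consistent_family (D : Type) (le : D -> D -> Prop) (I : finType)
  (W : I -> set X) (b : I -> D) : Prop :=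
  forall J : {set I},
    (exists y : Xhat, forall i, i \in J -> O_ (downW (W i)) y) ->
    exists u, forall i, i \in J -> le (b i) u.

Definition is_step_join (D : Type) (le : D -> D -> Prop) (bot : D)
  (I : finType) (W : I -> set X) (b : I -> D) (f : Xhat -> D) : Prop :=
  forall y, is_sup (all_D (D:=D)) le
              (fun d => exists i, step_val bot (b i) (W i) y d) (f y).

End Spaces.

From HB Require Import structures.
From mathcomp Require Import all_boot all_order.
From mathcomp Require Import boolp classical_sets topology.
From Stdlib Require List.

Set Implicit Arguments.
Unset Strict Implicit.
Unset Printing Implicit Defensive.
Local Open Scope classical_set_scope.

(* Points of [Xhat] are completely prime filters on the ideals of [Omega0].  The sets
   [O_(downW A)], [A] a basic set, are closed under finite intersections and unions, and
   a prime ideal argument (Zorn's lemma) shows that points separate basic sets: [A] is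
   contained in [B] as soon as [O_(downW A)] is contained in [O_(downW B)].  The same
   argument makes each [O_(downW A)] compact.

   The value of a step function [g] at a point only depends on which [O_(downW (W' j))]
   contain it, so [g^-1 (wb_up c)] is [O_(downW U_c)] for the finite union [U_c] of the
   basic sets [\bigcap_(j in K) W' j] on which [c ≪ g].  If [f ≪ g], write [g] as the
   directed supremum of the continuous functions [y |-> \sup {d in F | d ≪ g y}], [F]
   finite: [f] lies below one of them, so [b_i ≪ g] on [O_(downW W_i)], that is
   [W_i `<=` U_(b_i)].  Conversely, if [W_i `<=` U_(b_i)] and [g] lies below the supremum
   of a directed family [S], compactness of [O_(downW W_i)] yields a member of [S] above
   [b_i] on it, and directedness over the finite index set one member above [f]. *)

(** * bc-domains *)

Lemma directed_bound_seq (T A : Type) (P : T -> Prop) (le : T -> T -> Prop)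
    (S : T -> Prop) (Q : A -> T -> Prop) (r : seq A) :
  directed_in P le S -> (forall a x z, Q a x -> le x z -> Q a z) ->
  (forall a, exists2 x, S x & Q a x) -> exists2 x, S x & forall a, List.In a r -> Q a x.
Proof.
move=> [[x0 Sx0] [_ dirS]] Qup HQ; elim: r => [|a r [x1 Sx1 Qx1]]; first by exists x0.
have [x2 Sx2 Qx2] := HQ a; have [z [Sz [x1z x2z]]] := dirS _ _ Sx1 Sx2.
by exists z => // a' /= [<-|/Qx1 Qa']; [exact: Qup x2z|exact: Qup x1z].
Qed.

Lemma directed_bound_fin (T : Type) (I : finType) (P : T -> Prop) (le : T -> T -> Prop)
    (S : T -> Prop) (Q : I -> T -> Prop) :
  directed_in P le S -> (forall i x z, Q i x -> le x z -> Q i z) ->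
  (forall i, exists2 x, S x & Q i x) -> exists2 x, S x & forall i, Q i x.
Proof.
move=> dirS Qup /(directed_bound_seq (index_enum I) dirS Qup) [x Sx Qx].
exists x => // i; apply: Qx; elim: (index_enum I) (mem_index_enum i) => //= j r IH.
by rewrite inE => /orP[/eqP ->|/IH]; [left|right].
Qed.

Section BcDomain.
Variables (D : Type) (le : D -> D -> Prop) (bot : D).
Hypothesis hD : is_bc_domain le bot.

Local Notation "x ≪ y" := (way_below (@all_D D) le x y) (at level 70).

Lemma bcd_le_refl x : le x x. Proof. by case: hD => [[r _] _]. Qed.

Lemma bcd_le_trans x y z : le x y -> le y z -> le x z.
Proof. by case: hD => [[_ [t _]] _]; apply: t. Qed.

Lemma bcd_bot_least x : le bot x. Proof. by case: hD => _ [_ [_ [H _]]]. Qed.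

Lemma bcd_directed_sup S :
  directed_in (@all_D D) le S -> exists s, is_sup (@all_D D) le S s.
Proof. by case: hD => _ [H _]; apply: H. Qed.

Lemma bcd_bounded_sup S : (exists u, is_ub le S u) -> exists s, is_sup (@all_D D) le S s.
Proof. by case: hD => _ [_ [_ [_ H]]]; apply: H. Qed.

Lemma bcd_continuous x :
  directed_in (@all_D D) le (fun d => d ≪ x) /\
  is_sup (@all_D D) le (fun d => d ≪ x) x.
Proof. by case: hD => _ [_ [H _]]; apply: H. Qed.

Lemma way_below_le x y : x ≪ y -> le x y.
Proof.
move=> xy; have dy : directed_in (@all_D D) le [set y].
  split; first by exists y.
  by split=> // _ _ -> ->; exists y; split=> //; split; exact: bcd_le_refl.
have sy : is_sup (@all_D D) le [set y] y.
  by split=> //; split=> [_ ->|u _]; [exact: bcd_le_refl|apply].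
by have [_ [-> //]] := xy _ _ dy sy (bcd_le_refl y).
Qed.

Lemma way_below_le_trans x y z : x ≪ y -> le y z -> x ≪ z.
Proof. by move=> xy yz S s dS sS zs; apply: xy dS sS (bcd_le_trans yz zs). Qed.

Lemma le_way_below_trans x y z : le x y -> y ≪ z -> x ≪ z.
Proof.
move=> xy yz S s dS sS zs; have [d [Sd yd]] := yz S s dS sS zs.
by exists d; split=> //; exact: bcd_le_trans yd.
Qed.

(* The set of elements way below some element way below [z] is directed with supremum
   [z], by continuity applied twice. *)
Lemma way_below_interpolate x z : x ≪ z -> exists2 c, x ≪ c & c ≪ z.
Proof.
move=> xz; pose T d := exists2 e, d ≪ e & e ≪ z.
have [[[e0 he0] [_ dirz]] [_ [_ lz]]] := bcd_continuous z.
have dT : directed_in (@all_D D) le T.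
  split; first by have [[[d0 hd0] _] _] := bcd_continuous e0; exists d0, e0.
  split=> // d1 d2 [e1 d1e1 e1z] [e2 d2e2 e2z].
  have [e3 [e3z [e13 e23]]] := dirz _ _ e1z e2z.
  have [[_ [_ dir3]] _] := bcd_continuous e3.
  have [d3 [d3e3 d13d23]] :=
    dir3 _ _ (way_below_le_trans d1e1 e13) (way_below_le_trans d2e2 e23).
  by exists d3; split=> //; exists e3.
have sT : is_sup (@all_D D) le T z.
  split=> //; split=> [d [e de ez]|u _ ubu].
    exact: bcd_le_trans (way_below_le de) (way_below_le ez).
  apply: lz => // e ez; have [_ [_ [_ le_e]]] := bcd_continuous e.
  by apply: le_e => // d de; apply: ubu; exists e.
have [d [[e de ez] xd]] := xz T z dT sT (bcd_le_refl z).
by exists e => //; exact: le_way_below_trans xd de.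
Qed.

Lemma scott_open_wb_up c : scott_open le (wb_up le c).
Proof.
split=> [d e cd de|S s dS sS cs]; first exact: way_below_le_trans de.
have [c' cc' c's] := way_below_interpolate cs.
have [d [Sd c'd]] := c's S s dS sS (bcd_le_refl s).
by exists d; split=> //; exact: way_below_le_trans c'd.
Qed.

End BcDomain.

(** * Ideals of basic sets and points of [Xhat] *)

Section Space.
Variables (X : topologicalType) (Om : set (set X)).
Hypothesis hOm : viable_base Om.

Lemma base_setU U V : Om U -> Om V -> Om (U `|` V).
Proof. by case: hOm => _ [H _]; apply: H. Qed.

Lemma base_setI U V : Om U -> Om V -> Om (U `&` V).
Proof. by case: hOm => _ [_ [H _]]; apply: H. Qed.

Lemma base_set0 : Om set0. Proof. by case: hOm => _ [_ [_ [H _]]]. Qed.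

Lemma base_setT : Om setT. Proof. by case: hOm => _ [_ [_ [_ [H _]]]]. Qed.

Lemma base_bigI (T : Type) (r : seq T) (p : pred T) (F : T -> set X) :
  (forall k, Om (F k)) -> Om (\big[setI/setT]_(k <- r | p k) F k).
Proof. by move=> hF; apply: big_ind => //; [exact: base_setT|exact: base_setI]. Qed.

Lemma base_bigU (T : Type) (r : seq T) (p : pred T) (F : T -> set X) :
  (forall k, Om (F k)) -> Om (\big[setU/set0]_(k <- r | p k) F k).
Proof. by move=> hF; apply: big_ind => //; [exact: base_set0|exact: base_setU]. Qed.

Lemma ideal_downW A : Om A -> is_ideal Om (downW Om A).
Proof.
move=> hA; split; first by move=> U [].
split; first by exists A; split.
split; first by move=> U V hU UV [_ VA]; split=> //; apply: subset_trans VA.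
move=> U V [hU UA] [hV VA]; exists (U `|` V).
split; last by split=> x; [left|right].
by split; [exact: base_setU|move=> x [/UA|/VA]].
Qed.

Lemma ideal_set0 K : is_ideal Om K -> K set0.
Proof. by case=> _ [[U KU] [dc _]]; apply: dc KU; [exact: base_set0|]. Qed.

Lemma ideal_setU K U V : is_ideal Om K -> K U -> K V -> K (U `|` V).
Proof.
case=> sub [_ [dc dir]] KU KV; have [Z [KZ [UZ VZ]]] := dir _ _ KU KV.
by apply: dc KZ; [exact: base_setU (sub _ KU) (sub _ KV)|move=> x [/UZ|/VZ]].
Qed.

Lemma ideal_setI K1 K2 : is_ideal Om K1 -> is_ideal Om K2 -> is_ideal Om (K1 `&` K2).
Proof.
move=> i1 i2; have [s1 [_ [dc1 _]]] := i1; have [_ [_ [dc2 _]]] := i2.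
split; first by move=> Z [/s1].
split; first by exists set0; split; exact: ideal_set0.
split; first by move=> U V hU UV [? ?]; split; [exact: dc1 UV _|exact: dc2 UV _].
move=> U V [? ?] [? ?]; exists (U `|` V).
by split; [split; exact: ideal_setU|split=> x; [left|right]].
Qed.

Lemma downW_ideal_le K A : is_ideal Om K -> K A -> ideal_le (downW Om A) K.
Proof. by case=> _ [_ [dc _]] KA U [hU UA]; exact: dc UA KA. Qed.

Lemma downW_sup K :
  is_ideal Om K -> is_sup (is_ideal Om) (@ideal_le X) [set downW Om Z | Z in K] K.
Proof.
move=> iK; have [sub _] := iK.
split=> //; split; first by move=> _ [Z KZ <-]; exact: downW_ideal_le.
move=> L _ ubL Z KZ; have SZ : [set downW Om Z | Z in K] (downW Om Z) by exists Z.
by apply: (ubL _ SZ); split; [exact: sub|].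
Qed.

Lemma downW_setU_sup A B : Om A -> Om B ->
  is_sup (is_ideal Om) (@ideal_le X) [set downW Om A; downW Om B] (downW Om (A `|` B)).
Proof.
move=> hA hB; split; first exact: ideal_downW (base_setU hA hB).
split; first by move=> K [->|->] U [hU UA]; split=> // x /UA; [left|right].
move=> K iK ubK U [hU UAB].
have KA : K A by apply: (ubK (downW Om A)); [left|split].
have KB : K B by apply: (ubK (downW Om B)); [right|split].
by case: iK (iK) => _ [_ [dc _]] iK; apply: dc UAB (ideal_setU iK KA KB).
Qed.

Lemma downW_set0_sup : is_sup (is_ideal Om) (@ideal_le X) set0 (downW Om set0).
Proof.
split; first exact: ideal_downW base_set0.
split=> // K iK _ U [_ U0].
have -> : U = set0 by apply/seteqP; split=> // x /U0.
exact: ideal_set0.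
Qed.

Lemma downW_setI_inf A B : Om A -> Om B ->
  is_inf2 (is_ideal Om) (@ideal_le X) (downW Om A) (downW Om B) (downW Om (A `&` B)).
Proof.
move=> hA hB; split; first exact: ideal_downW (base_setI hA hB).
split; first by move=> U [hU UAB]; split=> // x /UAB [].
split; first by move=> U [hU UAB]; split=> // x /UAB [].
move=> K _ KA KB U KU; have [hU UA] := KA _ KU; have [_ UB] := KB _ KU.
by split=> // x Ux; split; [exact: UA|exact: UB].
Qed.

Local Notation Odown A := (@O_ _ Om (downW Om A)).

Section Point.
Variable y : Xhat Om.

Lemma O_ideal_up K L : O_ K y -> is_ideal Om L -> ideal_le K L -> O_ L y.
Proof. by case: y => /= z [_ [_ [up _]]]; apply: up. Qed.

Lemma O_ideal_sup (A : set (set (set X))) K : A `<=` is_ideal Om ->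
  is_sup (is_ideal Om) (@ideal_le X) A K -> O_ K y -> exists2 L, A L & O_ L y.
Proof. by case: y => /= z [_ [_ [_ [_ cp]]]] sA sK /(cp _ _ sA sK) [L []]; exists L. Qed.

Lemma Odown_ideal K A : Odown A y -> is_ideal Om K -> K A -> O_ K y.
Proof. by move=> yA iK KA; apply: O_ideal_up yA iK (downW_ideal_le iK KA). Qed.

Lemma Odown_sub A B : Odown A y -> Om B -> A `<=` B -> Odown B y.
Proof.
move=> yA hB AB; apply: O_ideal_up yA (ideal_downW hB) _ => U [hU UA].
by split=> //; apply: subset_trans AB.
Qed.

Lemma Odown_setI A B : Om A -> Om B -> Odown A y -> Odown B y -> Odown (A `&` B) y.
Proof.
case: y => /= z [_ [_ [_ [meet _]]]] hA hB zA zB.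
exact: meet zA zB (downW_setI_inf hA hB).
Qed.

Lemma Odown_setU A B : Om A -> Om B -> Odown (A `|` B) y -> Odown A y \/ Odown B y.
Proof.
move=> hA hB /(O_ideal_sup _ (downW_setU_sup hA hB)) [|L [->|->]]; [|by left|by right].
by move=> L [->|->]; exact: ideal_downW.
Qed.

Lemma Odown_set0 : ~ Odown set0 y.
Proof. by move/(O_ideal_sup _ downW_set0_sup) => [//|]. Qed.

Lemma Odown_setT : Odown setT y.
Proof.
case: y => z /= [sub [[K zK] [up _]]]; have [sK _] := sub _ zK.
by apply: up zK (ideal_downW base_setT) _ => U KU; split; [exact: sK|].
Qed.

Lemma O_idealE K : is_ideal Om K -> O_ K y <-> exists2 Z, K Z & Odown Z y.
Proof.
move=> iK; split; last by case=> Z KZ yZ; exact: Odown_ideal yZ iK KZ.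
have [sK _] := iK; move/(O_ideal_sup _ (downW_sup iK)).
by case=> [_ [Z KZ <-]|_ [Z KZ <-] yZ]; [exact: ideal_downW (sK _ KZ)|exists Z].
Qed.

Lemma Odown_bigI (T : eqType) (r : seq T) (p : pred T) (F : T -> set X) :
  (forall k, Om (F k)) ->
  Odown (\big[setI/setT]_(k <- r | p k) F k) y <->
  (forall k, k \in r -> p k -> Odown (F k) y).
Proof.
move=> hF; elim: r => [|x r IH].
  by rewrite big_nil; split=> // _; exact: Odown_setT.
rewrite big_cons; have hr := base_bigI r p hF.
case: ifP => px; split.
- move=> yI k; rewrite in_cons => /orP[/eqP -> _|kr].
    by apply: Odown_sub yI (hF x) _ => z [].
  by apply: (IH.1 (Odown_sub yI hr _)) => // z [].
- move=> H; apply: Odown_setI (hF x) hr _ _; first by apply: H; rewrite ?in_cons ?eqxx.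
  by apply/IH => k kr; apply: H; rewrite in_cons kr orbT.
- move=> /IH H k; rewrite in_cons => /orP[/eqP ->|kr]; [by rewrite px|exact: H].
- by move=> H; apply/IH => k kr; apply: H; rewrite in_cons kr orbT.
Qed.

Lemma Odown_bigU (T : eqType) (r : seq T) (p : pred T) (F : T -> set X) :
  (forall k, Om (F k)) ->
  Odown (\big[setU/set0]_(k <- r | p k) F k) y <->
  exists2 k, k \in r & p k /\ Odown (F k) y.
Proof.
move=> hF; elim: r => [|x r IH]; first by rewrite big_nil; split=> [/Odown_set0|[]].
rewrite big_cons; have hr := base_bigU r p hF; have hxr := base_setU (hF x) hr.
case: ifP => px; split.
- case/(Odown_setU (hF x) hr) => [yx|/IH [k kr yk]].
    by exists x; rewrite ?in_cons ?eqxx.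
  by exists k; rewrite // in_cons kr orbT.
- case=> k; rewrite in_cons => /orP[/eqP ->|kr] [pk yk].
    by apply: Odown_sub yk hxr _ => z; left.
  have yr : Odown (\big[setU/set0]_(k <- r | p k) F k) y by apply/IH; exists k.
  by apply: Odown_sub yr hxr _ => z; right.
- by case/IH => k kr yk; exists k; rewrite // in_cons kr orbT.
- case=> k; rewrite in_cons => /orP[/eqP ->|kr] [pk yk]; first by rewrite pk in px.
  by apply/IH; exists k.
Qed.

End Point.

Lemma O_ideal_cover (P : Xhat Om -> Prop) :
  (forall y, P y -> exists2 Z, Om Z & Odown Z y /\ forall y', Odown Z y' -> P y') ->
  exists2 K, is_ideal Om K & forall y, P y <-> O_ K y.
Proof.
move=> HP; pose K Z := Om Z /\ forall y, Odown Z y -> P y.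
have iK : is_ideal Om K.
  split; first by move=> Z [].
  split; first by exists set0; split=> [|y /Odown_set0]; [exact: base_set0|].
  split; first by move=> U V hU UV [hV PV]; split=> // y yU; apply/PV/(Odown_sub yU).
  move=> U V [hU PU] [hV PV]; exists (U `|` V); split; last by split=> x; [left|right].
  by split=> [|y /(Odown_setU hU hV) []]; [exact: base_setU|exact: PU|exact: PV].
exists K => // y; rewrite (O_idealE y iK); split; last by case=> Z [_ PZ] /PZ.
by case/HP => Z hZ [yZ PZ]; exists Z.
Qed.

(** * Separating basic sets by points *)

Definition ideal_avoiding (K0 : set (set X)) (A : set X) (K : set (set X)) : Prop :=
  [/\ K `<=` Om, (forall U V, Om U -> U `<=` V -> K V -> K U),
      (forall U V, K U -> K V -> K (U `|` V)), K0 `<=` K & ~ K A].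

Section Avoiding.
Variables (K0 : set (set X)) (A : set X).
Hypotheses (iK0 : is_ideal Om K0) (nK0A : ~ K0 A).

(* Zorn needs the empty chain to be admissible, so it is applied to the sets [L] with
   [K0 `|` L] avoiding [A] rather than to the avoiding sets themselves. *)
Lemma maximal_ideal_avoiding : exists M, ideal_avoiding K0 A M /\
  forall N, ideal_avoiding K0 A N -> M `<=` N -> N `<=` M.
Proof.
have [sK0 [_ [dcK0 _]]] := iK0.
pose P L := ideal_avoiding K0 A (K0 `|` L).
have chainP F : F `<=` P -> total_on F subset -> P (\bigcup_(L in F) L).
  move=> FP tot.
  have unionL L U V : F L -> K0 U \/ L U -> K0 V \/ L V ->
      (K0 `|` \bigcup_(L in F) L) (U `|` V).
    move=> FL; case: (FP _ FL) => _ _ un _ _ hU hV.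
    by case: (un U V hU hV); [left|right; exists L].
  split=> //.
  - move=> Z [/sK0 //|[L FL LZ]].
    by case: (FP _ FL) => sub _ _ _ _; apply: sub; right.
  - move=> U V hU UV [K0V|[L FL LV]]; first by left; exact: dcK0 UV K0V.
    case: (FP _ FL) => _ dc _ _ _.
    by case: (dc U V hU UV (or_intror LV)) => ?; [left|right; exists L].
  - move=> U V [K0U|[L1 FL1 L1U]] [K0V|[L2 FL2 L2V]].
    + by left; exact: ideal_setU.
    + by apply: (unionL L2) => //; [left|right].
    + by apply: (unionL L1) => //; [right|left].
    + case: (tot _ _ FL1 FL2) => L12.
        by apply: (unionL L2) => //; right => //; exact: L12.
      by apply: (unionL L1) => //; right => //; exact: L12.
  - by case=> [//|[L FL LA]]; case: (FP _ FL) => _ _ _ _; apply; right.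
have [M0 [PM0 maxM0]] := Zorn_bigcup chainP.
exists (K0 `|` M0); split=> // N AN M0N Z NZ; apply: contrapT => nZ.
have PN : P N by rewrite /P; case: (AN) => _ _ _ /setUidr ->.
apply: (maxM0 N _ PN); split=> [U M0U|NM0]; first by apply: M0N; right.
by apply/nZ; right; exact: NM0.
Qed.

Hypothesis hA : Om A.
Variable M : set (set X).
Hypotheses (aM : ideal_avoiding K0 A M)
  (maxM : forall N, ideal_avoiding K0 A N -> M `<=` N -> N `<=` M).

Lemma maximal_avoiding_cover U : Om U -> ~ M U -> exists2 k, M k & A `<=` k `|` U.
Proof.
case: aM => sM dcM unM K0M nMA hU nMU; apply: contrapT => nex.
pose N Z := Om Z /\ exists2 k, M k & Z `<=` k `|` U.
have MN : M `<=` N by move=> Z MZ; split; [exact: sM|exists Z => // x; left].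
have aN : ideal_avoiding K0 A N.
  split=> [Z []//|V Z hV VZ [_ [k Mk Zk]]|V Z [hV [k1 Mk1 V1]] [hZ [k2 Mk2 Z2]]|
            Z /K0M/MN//|].
  - by split=> //; exists k => //; exact: subset_trans Zk.
  - split; first exact: base_setU.
    exists (k1 `|` k2); first exact: unM.
    by move=> x [/V1|/Z2] [?|?]; [left; left|right|left; right|right].
  - by case=> _ [k Mk Ak]; apply: nex; exists k.
apply/nMU/(maxM aN MN); split=> //.
by exists set0; [exact: K0M _ (ideal_set0 iK0)|move=> x; right].
Qed.

Lemma maximal_avoiding_prime U V : Om U -> Om V -> M (U `&` V) -> M U \/ M V.
Proof.
move=> hU hV MUV; apply: contrapT => /not_orP [nU nV].
have [k1 Mk1 A1] := maximal_avoiding_cover hU nU.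
have [k2 Mk2 A2] := maximal_avoiding_cover hV nV.
case: aM => _ dcM unM _; apply; apply: dcM hA _ (unM _ _ (unM _ _ Mk1 Mk2) MUV).
move=> x Ax; case: (A1 _ Ax) => [?|Ux]; first by left; left.
by case: (A2 _ Ax) => [?|Vx]; [left; right|right].
Qed.

End Avoiding.

Lemma cpf_of_prime_ideal M : is_ideal Om M -> ~ M setT ->
  (forall U V, Om U -> Om V -> M (U `&` V) -> M U \/ M V) ->
  is_cpf Om [set K | is_ideal Om K /\ exists2 Z, K Z & ~ M Z].
Proof.
move=> iM nMT primeM; split; first by move=> K [].
split.
  exists (downW Om setT); split; first exact: ideal_downW base_setT.
  by exists setT => //; split; [exact: base_setT|].
split; first by move=> K L [_ [Z KZ nMZ]] iL KL; split=> //; exists Z => //; exact: KL.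
split.
  move=> K1 K2 K [i1 [Z1 K1Z1 nM1]] [i2 [Z2 K2Z2 nM2]] [iK [_ [_ glb]]].
  have [s1 [_ [dc1 _]]] := i1; have [s2 [_ [dc2 _]]] := i2.
  have hZ1 := s1 _ K1Z1; have hZ2 := s2 _ K2Z2.
  split=> //; exists (Z1 `&` Z2); last by case/(primeM _ _ hZ1 hZ2).
  apply: (glb _ (ideal_setI i1 i2)); [by move=> Z []..|].
  have hZ12 := base_setI hZ1 hZ2.
  by split; [apply: dc1 K1Z1|apply: dc2 K2Z2] => // x [].
move=> F K sF [_ [_ leastK]] [_ [Z KZ nMZ]]; apply: contrapT => nF; apply/nMZ.
apply: (leastK M iM) KZ => L FL Z' LZ'; apply: contrapT => nMZ'; apply: nF.
by exists L; split=> //; split; [exact: sF|exists Z'].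
Qed.

Lemma Odown_separation K A : is_ideal Om K -> Om A -> ~ K A ->
  exists2 y : Xhat Om, Odown A y & ~ O_ K y.
Proof.
move=> iK hA nKA; have [M [aM maxM]] := maximal_ideal_avoiding iK nKA.
have [sM dcM unM KM nMA] := aM.
have iM : is_ideal Om M.
  split=> //; split; first by exists set0; exact: KM _ (ideal_set0 iK).
  by split=> // U V MU MV; exists (U `|` V); split; [exact: unM|split=> x; [left|right]].
have nMT : ~ M setT by move=> MT; apply/nMA/(dcM _ _ hA _ MT).
have cpf := cpf_of_prime_ideal iM nMT (maximal_avoiding_prime iK hA aM maxM).
exists (exist _ _ cpf); rewrite /O_ /=.
  by split; [exact: ideal_downW|exists A; [split|]].
by case=> _ [Z KZ []]; exact: KM.
Qed.

Lemma Odown_subset A B : Om A -> Om B ->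
  (forall y : Xhat Om, Odown A y -> Odown B y) -> A `<=` B.
Proof.
move=> hA hB AB; apply: contrapT => nAB.
have [y yA] := Odown_separation (ideal_downW hB) hA (fun h => nAB h.2).
by move/AB: yA.
Qed.

(** * Scott-continuous functions on the space of points *)

Variables (D : Type) (le : D -> D -> Prop) (bot : D).
Hypothesis hD : is_bc_domain le bot.

Local Notation "x ≪ y" := (way_below (@all_D D) le x y) (at level 70).

Lemma scott_continuous_locally_increasing (h : Xhat Om -> D) :
  (forall y, exists2 Z, Om Z & Odown Z y /\ forall y', Odown Z y' -> le (h y) (h y')) ->
  scott_continuous le h.
Proof.
move=> Hh V [up _].
suff [K iK HK] : exists2 K, is_ideal Om K & forall y, V (h y) <-> O_ K y by exists K.
apply: O_ideal_cover => y Vy; have [Z hZ [yZ HZ]] := Hh y.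
by exists Z => //; split=> // y' /HZ; exact: up.
Qed.

Lemma directed_eval (S : set (Xhat Om -> D)) y :
  directed_in (scott_continuous le) (fun_le le) S ->
  directed_in (@all_D D) le [set k y | k in S].
Proof.
move=> [[k0 Sk0] [_ dirS]]; split; first by exists (k0 y), k0.
split=> // _ _ [k1 Sk1 <-] [k2 Sk2 <-]; have [k3 [Sk3 [k13 k23]]] := dirS _ _ Sk1 Sk2.
by exists (k3 y); split; [exists k3|split; [exact: k13|exact: k23]].
Qed.

Section DirectedFamily.
Variables (S : set (Xhat Om -> D)) (p : Xhat Om -> D).
Hypotheses (dS : directed_in (scott_continuous le) (fun_le le) S)
  (psup : forall y, is_sup (@all_D D) le [set k y | k in S] (p y)).

Lemma directed_pointwise_sup_continuous : scott_continuous le p.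
Proof.
move=> V oV; have [up inacc] := oV; have [_ [Scont _]] := dS.
suff [K iK HK] : exists2 K, is_ideal Om K & forall y, V (p y) <-> O_ K y by exists K.
apply: O_ideal_cover => y Vy.
have [_ [[k Sk <-] Vk]] := inacc _ _ (directed_eval y dS) (psup y) Vy.
have [L [iL HL]] := Scont k Sk V oV.
have [Z LZ yZ] := (O_idealE y iL).1 ((HL y).1 Vk).
exists Z; first by case: iL => sL _; exact: sL.
split=> // y' y'Z; apply: up ((HL y').2 (Odown_ideal y'Z iL LZ)) _.
by have [_ [ub _]] := psup y'; apply: ub; exists k.
Qed.

(* The basic sets on which some member of [S] is already way above [c] form an ideal;
   a point of [Odown W] outside it would contradict [c ≪ p y], as [wb_up le c] is
   Scott open. *)
Lemma directed_way_below_on_Odown c W : Om W ->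
  (forall y, Odown W y -> c ≪ p y) -> exists2 k, S k & forall y, Odown W y -> c ≪ k y.
Proof.
move=> hW Hc; have [[k0 Sk0] [Scont Sdir]] := dS.
pose L Z := Om Z /\ exists2 k, S k & forall y, Odown Z y -> c ≪ k y.
have iL : is_ideal Om L.
  split; first by move=> Z [].
  split; first by exists set0; split; [exact: base_set0|exists k0 => // y /Odown_set0].
  split=> [U V hU UV [hV [k Sk Hk]]|U V [hU [k1 Sk1 H1]] [hV [k2 Sk2 H2]]].
    by split=> //; exists k => // y yU; apply/Hk/(Odown_sub yU).
  have [k3 [Sk3 [k13 k23]]] := Sdir _ _ Sk1 Sk2.
  exists (U `|` V); split; last by split=> x; [left|right].
  have hUV := base_setU hU hV.
  split=> //.
  exists k3 => // y /(Odown_setU hU hV) [/H1 ck1|/H2 ck2].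
    exact: (way_below_le_trans hD ck1 (k13 y)).
  exact: (way_below_le_trans hD ck2 (k23 y)).
apply: contrapT => nW; have [y yW] := Odown_separation iL hW (fun h => nW h.2).
apply; have [_ [[k Sk <-] ck]] :=
  (scott_open_wb_up hD c).2 _ _ (directed_eval y dS) (psup y) (Hc y yW).
have [K [iK HK]] := Scont k Sk _ (scott_open_wb_up hD c).
have [Z KZ yZ] := (O_idealE y iK).1 ((HK y).1 ck).
apply: Odown_ideal yZ iL _; split; first by case: iK => sK _; exact: sK.
by exists k => // y' y'Z; apply/(HK y'); exact: Odown_ideal y'Z iK KZ.
Qed.

End DirectedFamily.
(** * Step functions and the way-below relation *)

Section StepJoin.
Variables (I : finType) (W : I -> set X) (b : I -> D) (f : Xhat Om -> D).
Hypotheses (hW : forall i, Om (W i)) (hf : is_step_join le bot W b f).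

Lemma step_join_ub y i : Odown (W i) y -> le (b i) (f y).
Proof. by move=> yi; have [_ [ub _]] := hf y; apply: ub; exists i; left. Qed.

Lemma step_join_least y u : (forall i, Odown (W i) y -> le (b i) u) -> le (f y) u.
Proof.
move=> H; have [_ [_ least]] := hf y; apply: least => // d [i [[yi ->]|[_ ->]]].
  exact: H.
exact: bcd_bot_least hD u.
Qed.

Lemma step_join_mono y y' :
  (forall i, Odown (W i) y -> Odown (W i) y') -> le (f y) (f y').
Proof. by move=> H; apply: step_join_least => i /H; exact: step_join_ub. Qed.

Definition step_nbhd (y : Xhat Om) := \big[setI/setT]_(i | `[< Odown (W i) y >]) W i.

Lemma base_step_nbhd y : Om (step_nbhd y).
Proof. exact: base_bigI. Qed.

Lemma Odown_step_nbhd y : Odown (step_nbhd y) y.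
Proof. by apply/(Odown_bigI y _ _ hW) => i _ /asboolP. Qed.

Lemma step_nbhd_active y y' :
  Odown (step_nbhd y) y' -> forall i, Odown (W i) y -> Odown (W i) y'.
Proof.
move/(Odown_bigI y' _ _ hW) => H i yi.
by apply: H; [exact: mem_index_enum|exact/asboolP].
Qed.

Lemma step_join_continuous : scott_continuous le f.
Proof.
apply: scott_continuous_locally_increasing => y.
exists (step_nbhd y); first exact: base_step_nbhd.
by split=> [|y' /step_nbhd_active H]; [exact: Odown_step_nbhd|exact: step_join_mono].
Qed.

End StepJoin.

Section WayBelowStep.
Variables (J : finType) (W' : J -> set X) (b' : J -> D) (g : Xhat Om -> D).
Hypotheses (hW' : forall j, Om (W' j)) (hg : is_step_join le bot W' b' g).

Definition wb_preimage (c : D) : set X :=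
  \big[setU/set0]_(K : {set J} |
     `[< forall y, (forall j, j \in K -> Odown (W' j) y) -> c ≪ g y >])
    \big[setI/setT]_(j in K) W' j.

Lemma base_wb_preimage c : Om (wb_preimage c).
Proof. by apply: base_bigU => K; exact: base_bigI. Qed.

Lemma Odown_wb_preimage c y : Odown (wb_preimage c) y <-> c ≪ g y.
Proof.
have hK (K : {set J}) : Om (\big[setI/setT]_(j in K) W' j) by exact: base_bigI.
rewrite /wb_preimage (Odown_bigU y _ _ hK); split.
  case=> K _ [/asboolP cK yK]; apply: cK => j jK.
  by move/(Odown_bigI y _ _ hW'): yK; apply=> //; exact: mem_index_enum.
move=> cg; exists (finset (fun j => `[< Odown (W' j) y >])); first exact: mem_index_enum.
split; last by apply/(Odown_bigI y _ _ hW') => j _; rewrite inE => /asboolP.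
apply/asboolP => y' active; apply: (way_below_le_trans hD cg).
by apply: (step_join_mono hg) => j yj; apply: active; rewrite inE; exact/asboolP.
Qed.

(* Lists stand for finite subsets of [D], which has no decidable equality. *)
Definition approx_cands (F : seq D) (y : Xhat Om) : set D :=
  [set d | List.In d F /\ d ≪ g y].

Lemma exists_approx : exists approx : seq D -> Xhat Om -> D,
  forall F y, is_sup (@all_D D) le (approx_cands F y) (approx F y).
Proof.
suff /choice [approx Happrox] : forall Fy : seq D * Xhat Om,
    exists s, is_sup (@all_D D) le (approx_cands Fy.1 Fy.2) s.
  by exists (fun F y => approx (F, y)) => F y; exact: Happrox (F, y).
move=> [F y]; apply: (bcd_bounded_sup hD); exists (g y) => d [_ dg].
exact: (way_below_le hD dg).
Qed.

Section Approximants.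
Variable approx : seq D -> Xhat Om -> D.
Hypothesis approxP : forall F y, is_sup (@all_D D) le (approx_cands F y) (approx F y).

Lemma approx_le F F' y y' :
  approx_cands F y `<=` approx_cands F' y' -> le (approx F y) (approx F' y').
Proof.
move=> sub; have [_ [_ least]] := approxP F y; apply: least => // d /sub.
exact: (approxP F' y').2.1.
Qed.

Lemma approx_continuous F : scott_continuous le (approx F).
Proof.
apply: scott_continuous_locally_increasing => y.
exists (step_nbhd W' y); first exact: base_step_nbhd.
split=> [|y' /(step_nbhd_active hW') active]; first exact: Odown_step_nbhd.
apply: approx_le => d [dF dg]; split=> //; apply: (way_below_le_trans hD dg).
exact: (step_join_mono hg active).
Qed.

Lemma approx_way_below F y : approx F y ≪ g y.
Proof.
move=> T t dT sT gt.
have [d Td Hd] : exists2 d, T d & forall c, List.In c F -> c ≪ g y -> le c d.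
  apply: (directed_bound_seq _ dT) => [c d e cd de /cd cd'|c].
    exact: (bcd_le_trans hD cd' de).
  case: (pselect (c ≪ g y)) => [cg|ncg].
    by have [d [Td cd]] := cg T t dT sT gt; exists d.
  by have [[d0 Td0] _] := dT; exists d0 => // /ncg.
exists d; split=> //; have [_ [_ least]] := approxP F y.
by apply: least => // c [cF cg]; exact: Hd.
Qed.

Lemma range_approx_directed :
  directed_in (scott_continuous le) (fun_le le) (range approx).
Proof.
split; first by exists (approx [::]), [::].
split; first by move=> _ [F _ <-]; exact: approx_continuous.
move=> _ _ [F1 _ <-] [F2 _ <-]; exists (approx (F1 ++ F2)).
split; first by exists (F1 ++ F2).
split=> y; apply: approx_le => d [dF dg]; split=> //.
  by apply: List.in_or_app; left.
by apply: List.in_or_app; right.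
Qed.

Lemma range_approx_sup : is_sup (scott_continuous le) (fun_le le) (range approx) g.
Proof.
split; first exact: (step_join_continuous hW' hg).
split=> [_ [F _ <-] y|u _ ubu y].
  have [_ [_ least]] := approxP F y; apply: least => // d [_ dg].
  exact: (way_below_le hD dg).
have [_ [_ [_ least]]] := bcd_continuous hD (g y); apply: least => // c cg.
have Sc : range approx (approx [:: c]) by exists [:: c].
apply: (bcd_le_trans hD _ (ubu _ Sc y)); apply: (approxP [:: c] y).2.1.
by split=> //; left.
Qed.

End Approximants.

Variables (I : finType) (W : I -> set X) (b : I -> D) (f : Xhat Om -> D).
Hypotheses (hW : forall i, Om (W i)) (hf : is_step_join le bot W b f).

Lemma way_below_wb_on_Odown : way_below (scott_continuous le) (fun_le le) f g ->
  forall i y, Odown (W i) y -> b i ≪ g y.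
Proof.
move=> fg i y yi; have [approx approxP] := exists_approx.
have [_ [[F _ <-] fF]] :=
  fg _ _ (range_approx_directed approxP) (range_approx_sup approxP)
  (fun y => bcd_le_refl hD (g y)).
apply: (le_way_below_trans hD _ (approx_way_below approxP F (y := y))).
exact: (bcd_le_trans hD (step_join_ub hf yi) (fF y)).
Qed.

Lemma way_below_of_sub_wb_preimage : (forall i, W i `<=` wb_preimage (b i)) ->
  way_below (scott_continuous le) (fun_le le) f g.
Proof.
move=> Wsub S s dS [_ [_ sleast]] gs.
have /choice [p psup] : forall y, exists d, is_sup (@all_D D) le [set k y | k in S] d.
  by move=> y; apply: (bcd_directed_sup hD); exact: directed_eval.
have sp : fun_le le s p.
  apply: sleast; first exact: (directed_pointwise_sup_continuous dS psup).
  by move=> k Sk y; apply: (psup y).2.1; exists k.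
have cover i : exists2 k, S k & forall y, Odown (W i) y -> le (b i) (k y).
  suff [k Sk Hk] : exists2 k, S k & forall y, Odown (W i) y -> b i ≪ k y.
    by exists k => // y /Hk /(way_below_le hD).
  apply: (directed_way_below_on_Odown dS psup (hW i)) => y yi.
  apply: (way_below_le_trans hD _ (bcd_le_trans hD (gs y) (sp y))).
  exact/(Odown_wb_preimage _ y)/(Odown_sub yi (base_wb_preimage _) (Wsub i)).
have [k Sk Hk] := directed_bound_fin dS
  (fun i k k' H kk' y yi => bcd_le_trans hD (H y yi) (kk' y)) cover.
by exists k; split=> // y; apply: (step_join_least hf) => i; exact: Hk.
Qed.

End WayBelowStep.

End Space.

Theorem mainTheorem17
  (X : topologicalType) (Omega0 : set (set X))
  (D : Type) (le : D -> D -> Prop) (bot : D) (D0 : D -> Prop)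
  (I J : finType)
  (W : I -> set X) (b : I -> D) (W' : J -> set X) (b' : J -> D)
  (f g : Xhat Omega0 -> D) :
  viable_base Omega0 ->
  is_bc_domain le bot ->
  is_basis le D0 ->
  (forall i, Omega0 (W i) /\ D0 (b i)) ->
  (forall j, Omega0 (W' j) /\ D0 (b' j)) ->
  consistent_family Omega0 le W b ->
  consistent_family Omega0 le W' b' ->
  is_step_join le bot W b f ->
  is_step_join le bot W' b' g ->
  exists U : I -> set X,
    (forall i, Omega0 (U i) /\
       (forall y, O_ (downW Omega0 (U i)) y <-> wb_up le (b i) (g y))) /\
    (way_below (scott_continuous le) (fun_le le) f g <->
       (forall i, W i `<=` U i)).
Proof.
move=> hOm hD _ hWb hWb' _ _ hf hg.
have hW i := (hWb i).1; have hW' j := (hWb' j).1.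
have hU c := base_wb_preimage hOm le g hW' c.
have HU := Odown_wb_preimage hOm hD hW' hg.
exists (fun i => wb_preimage le W' g (b i)); split=> [i|].
  by split=> [|y]; [exact: hU|exact: HU].
split=> [fg i|]; last exact: (way_below_of_sub_wb_preimage hOm hD hW' hg hW hf).
apply: (Odown_subset hOm (hW i) (hU _)) => y yi; apply/HU.
exact: (way_below_wb_on_Odown hOm hD hW' hg hf fg yi).
Qed.
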